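(* A finite group $G$ is $2'$-simple if and only if it has a subnormal series $1=I_0\trianglelefteq I_1\trianglelefteq\cdots\trianglelefteq I_t=G$ in which every quotient $I_{j+1}/I_j$ is generated by elements of order $2$.
   Context: A finite group $G$ is called $2'$-simple if it has no proper normal subgroup of odd index (equivalently, no nontrivial quotient of odd order). A subnormal series is a chain of subgroups each normal in the next. *)

From mathcomp Require Import all_boot all_fingroup.
Set Implicit Arguments. Unset Strict Implicit. Unset Printing Implicit Defensive.
Local Open Scope group_scope.

Definition two'_simple (gT : finGroupType) (G : {group gT}) : Prop :=
  forall H : {group gT}, H <| G -> odd #|G : H| -> H :=: G.

Definition involutions (gT : finGroupType) (A : {set gT}) : {set gT} :=
  [set x in A | #[x] == 2%N].

Definition inv_gen_subnormal_series (gT : finGroupType) (G : {group gT})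
    (t : nat) (I : nat -> {group gT}) : Prop :=
  [/\ I 0%N :=: 1, I t :=: G &
      forall j, (j < t)%N ->
        I j <| I j.+1 /\
        (I j.+1 / I j)%g = << involutions (I j.+1 / I j) >>].

(* If H <| G has odd index, every x in G with x ^+ 2 in H already lies in H:
   the order of its image in G / H divides both 2 and #|G / H|.  Climbing a
   series whose factors are generated by involutions therefore never leaves H,
   so H = G.  Conversely, starting from 1, repeatedly adjoin all elements of G
   whose square lies in the previous term; every factor is generated by
   involutions, and where the series stabilises at K the group G / K has no
   involution, so it has odd order by Cauchy's theorem, and K = G. *)

From mathcomp Require Import all_boot all_fingroup cyclic pgroup.
Set Implicit Arguments. Unset Strict Implicit. Unset Printing Implicit Defensive.
Local Open Scope group_scope.

Lemma ascending_chain_stationary (T : finType) (f : nat -> {set T}) :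
  (forall n, f n \subset f n.+1) -> exists n, f n.+1 = f n.
Proof.
move=> sf; case: (boolP [exists n : 'I_#|T|.+1, f n.+1 == f n]).
  by case/existsP=> n /eqP; exists n.
rewrite negb_exists => /forallP neqf.
have card_f n : n <= #|T|.+1 -> n <= #|f n|.
  elim: n => [|n IHn] // lt_nT.
  apply: leq_ltn_trans (IHn (ltnW lt_nT)) (proper_card _).
  by rewrite properEneq eq_sym sf andbT (neqf (Ordinal lt_nT)).
by have := card_f _ (leqnn _); rewrite ltnNge max_card.
Qed.

Lemma subset_chain_le (T : finType) (f : nat -> {set T}) t :
  (forall j, j < t -> f j \subset f j.+1) -> forall j, j <= t -> f j \subset f t.
Proof.
elim: t => [|t IHt] sf j; first by rewrite leqn0 => /eqP->.
rewrite leq_eqVlt ltnS => /predU1P[-> // | le_jt].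
exact: subset_trans (IHt (fun i lt_it => sf i (ltnW lt_it)) j le_jt) (sf t (ltnSn t)).
Qed.

Lemma order_eq2 (gT : finGroupType) (x : gT) : x ^+ 2 = 1 -> x != 1 -> #[x] = 2.
Proof. by move=> x2 ntx; apply/prime_nt_dvdP; rewrite ?order_eq1 ?order_dvdn ?x2. Qed.

Section SquareRoots.

Variable gT : finGroupType.
Implicit Types (G H K L : {group gT}) (x : gT).

Lemma mem_coprime_expg G H x n :
  x \in G -> G \subset 'N(H) -> coprime n #|G / H| -> x ^+ n \in H -> x \in H.
Proof.
move=> Gx nHG co_n_GH xnH; have Nx := subsetP nHG x Gx.
apply: coset_idr => //; apply/eqP; rewrite -order_eq1 -dvdn1 -(eqP co_n_GH).
rewrite dvdn_gcd order_dvdG ?mem_quotient // andbT.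
by rewrite order_dvdn -morphX //; apply/eqP/coset_id.
Qed.

Lemma sub_involution_quotient G H K L :
    G \subset 'N(H) -> odd #|G / H| -> K \subset G -> L \subset H -> L <| K ->
  K / L = <<involutions (K / L)>> -> K \subset H.
Proof.
move=> nHG oddGH sKG sLH /andP[sLK nLK] genKL.
rewrite -(quotientSGK nLK sLH) genKL gen_subG.
apply/subsetP=> _ /setIdP[/morphimP[x Nx Kx ->] /eqP ox].
rewrite mem_quotient // (mem_coprime_expg (n := 2) (subsetP sKG x Kx) nHG) ?coprime2n //.
apply: (subsetP sLH); apply: coset_idr; first by rewrite groupX.
by rewrite morphX // -ox expg_order.
Qed.

Lemma inv_gen_subnormal_series_two'_simple G t I :
  inv_gen_subnormal_series G t I -> two'_simple G.
Proof.
move=> [I0 It serI] H /andP[sHG nHG] oddGH.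
rewrite -card_quotient // in oddGH; apply/eqP; rewrite eqEsubset sHG /= -It.
have sIG j : j <= t -> I j \subset G.
  rewrite -It; move: j; apply: (@subset_chain_le gT (fun i => gval (I i)) t) => i.
  by case/serI=> /andP[].
have sIH j : j <= t -> I j \subset H.
  elim: j => [|j IHj] lt_jt; first by rewrite I0 sub1G.
  have [nIj genI] := serI j lt_jt.
  exact: sub_involution_quotient nHG oddGH (sIG _ lt_jt) (IHj (ltnW lt_jt)) nIj genI.
exact: sIH (leqnn t).
Qed.

Definition sqrt_gen (G H : {set gT}) := <<[set x in G | x ^+ 2 \in H]>>.
Canonical sqrt_gen_group G H := [group of sqrt_gen G H].

Lemma sqrt_gen_sub G H : sqrt_gen G H \subset G.
Proof. by rewrite gen_subG; apply/subsetP=> x /setIdP[]. Qed.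

Lemma sub_sqrt_gen G H : H \subset G -> H \subset sqrt_gen G H.
Proof.
by move=> sHG; apply/subsetP=> x Hx; apply/mem_gen; rewrite inE (subsetP sHG) ?groupX.
Qed.

Lemma sqrt_gen_normal G H : G \subset 'N(H) -> sqrt_gen G H <| G.
Proof.
move=> nHG; rewrite /normal sqrt_gen_sub norms_gen //.
apply/subsetP=> y Gy; rewrite inE; apply/subsetP=> _ /imsetP[z /setIdP[Gz z2H] ->].
by rewrite inE groupJ //= -conjXg memJ_norm // (subsetP nHG).
Qed.

Lemma quotient_sqrt_gen G H : G \subset 'N(H) ->
  sqrt_gen G H / H = <<involutions (sqrt_gen G H / H)>>.
Proof.
move=> nHG; set S := [set x in G | x ^+ 2 \in H].
have nHS : S \subset 'N(H) by apply/subsetP=> x /setIdP[Gx _]; apply: (subsetP nHG).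
rewrite [sqrt_gen G H / H]quotient_gen //.
apply/eqP; rewrite eqEsubset andbC gen_subG; apply/andP; split.
  by apply/subsetP=> y /setIdP[].
rewrite gen_subG; apply/subsetP=> _ /morphimP[x Nx Sx ->] /=.
have [-> | ntx] := eqVneq (coset H x) 1; first exact: group1.
have [Gx x2H] := setIdP Sx.
apply/mem_gen/setIdP; split; first by apply: mem_gen; apply: mem_morphim.
by apply/eqP; apply: order_eq2 => //; rewrite -morphX //; apply: coset_id.
Qed.

Lemma odd_quotient_sqrt_gen G H :
  G \subset 'N(H) -> sqrt_gen G H \subset H -> odd #|G / H|.
Proof.
move=> nHG sSH; apply: contraT; rewrite -dvdn2.
case/(Cauchy (isT : prime 2))=> _ /morphimP[x Nx Gx ->] /= ox.
have x2H : x ^+ 2 \in H.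
  by apply: coset_idr; rewrite ?groupX // morphX // -ox expg_order.
have Hx : x \in H by apply/(subsetP sSH)/mem_gen; rewrite inE Gx.
by move: ox; rewrite coset_id // order1.
Qed.

Fixpoint sqrt_series G n : {group gT} :=
  if n is m.+1 then sqrt_gen_group G (sqrt_series G m) else 1%G.

Lemma sqrt_series_normal G n : sqrt_series G n <| G.
Proof. by elim: n => [|n IHn]; [apply: normal1 | apply/sqrt_gen_normal/normal_norm]. Qed.

Lemma sqrt_series_subS G n : sqrt_series G n \subset sqrt_series G n.+1.
Proof. exact/sub_sqrt_gen/normal_sub/sqrt_series_normal. Qed.

Lemma sqrt_series_inv_gen G n :
  sqrt_series G n :=: G -> inv_gen_subnormal_series G n (sqrt_series G).
Proof.
split=> // j _; have nGj := sqrt_series_normal G j.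
split; last exact/quotient_sqrt_gen/normal_norm.
exact: normalS (sqrt_series_subS G j) (normal_sub (sqrt_series_normal G j.+1)) nGj.
Qed.

Lemma two'_simple_sqrt_series G : two'_simple G -> exists n, sqrt_series G n :=: G.
Proof.
move=> simG.
have [n stable] := ascending_chain_stationary
  (f := fun n => gval (sqrt_series G n)) (sqrt_series_subS G).
have nGn := sqrt_series_normal G n.
exists n; apply: simG; rewrite // -card_quotient ?normal_norm //.
apply: odd_quotient_sqrt_gen (normal_norm nGn) _.
by change (sqrt_series G n.+1 \subset sqrt_series G n); rewrite stable.
Qed.

End SquareRoots.

Theorem mainTheorem15 (gT : finGroupType) (G : {group gT}) :
  two'_simple G <->
  exists (t : nat) (I : nat -> {group gT}), inv_gen_subnormal_series G t I.
Proof.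
split=> [/two'_simple_sqrt_series[n sGn] | [t [I serI]]].
  by exists n, (sqrt_series G); apply: sqrt_series_inv_gen.
exact: inv_gen_subnormal_series_two'_simple serI.
Qed.
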